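(* Let $\Psi=\{\psi_i\}_{i\in I}$ be a lower frame sequence in a separable Hilbert space $\mathcal{H}$ with canonical dual $\widetilde\Psi=\{\widetilde\psi_i\}_{i\in I}$, and let $h\in\mathcal{H}$. Suppose $h$ is represented weakly by $\Psi$, i.e. there is a scalar sequence $\{c_i\}_{i\in I}$ such that $\langle h,g\rangle=\langle\sum_{i\in I}c_i\psi_i,g\rangle=\sum_{i\in I}c_i\langle\psi_i,g\rangle$ for all $g\in\mathcal{D}(C_\Psi)$. Then $$\sum_{i\in I}|c_i|^2=\sum_{i\in I}|\langle h,\widetilde\psi_i\rangle|^2+\sum_{i\in I}|c_i-\langle h,\widetilde\psi_i\rangle|^2.$$ In particular $\sum_i|c_i|^2\ge\sum_i|\langle h,\widetilde\psi_i\rangle|^2$.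
   Context: $I$ is countable. $\mathcal{D}(C_\Psi)=\{f\in\mathcal{H}:\{\langle f,\psi_i\rangle\}_i\in\ell^2\}$, $\mathcal{H}_\Psi:=\overline{\mathcal{D}(C_\Psi)}$, $\pi_{\mathcal{H}_\Psi}$ the orthogonal projection onto $\mathcal{H}_\Psi$. $\Psi$ is a lower frame sequence if there is $A>0$ with $A\|f\|^2\le\sum_i|\langle f,\psi_i\rangle|^2$ for all $f\in\mathcal{D}(C_\Psi)$. The generalized frame operator is $\Gamma_\Psi:=(C^r_\Psi)^*C^r_\Psi$, where $C^r_\Psi:\mathcal{D}(C_\Psi)\subseteq\mathcal{H}_\Psi\to\ell^2$, $C^r_\Psi f=\{\langle f,\psi_i\rangle\}_i$; for a lower frame sequence $\Gamma_\Psi:\mathcal{D}(\Gamma_\Psi)\to\mathcal{H}_\Psi$ is bijective with bounded inverse on $\mathcal{H}_\Psi$. The canonical dual is $\widetilde\psi_i:=\Gamma_\Psi^{-1}\pi_{\mathcal{H}_\Psi}\psi_i$. *)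

From mathcomp Require Import all_boot all_order all_algebra.
From mathcomp Require Import all_classical all_reals all_analysis.
From mathcomp.real_closed Require Export complex.
Import Order.TTheory GRing.Theory Num.Theory.
Local Open Scope classical_set_scope.
Local Open Scope ring_scope.

Set Implicit Arguments.
Unset Strict Implicit.
Unset Printing Implicit Defensive.

Section Hilbert.
Variable R : realType.
Local Notation C := R[i].

Definition cabs2 (z : C) : R := complex.Re z ^+ 2 + complex.Im z ^+ 2.

Definition cconv (u : nat -> C) (l : C) : Prop :=
  forall e : R, 0 < e -> exists N : nat, forall n, (N <= n)%N -> cabs2 (u n - l) < e.

Variable V : lmodType C.
Variable ip : V -> V -> C.   (* inner product, linear in the first argument *)

Definition hnorm2 (x : V) : R := complex.Re (ip x x).

Record is_sep_hilbert : Prop := {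
  ip_linl : forall (a : C) (x y z : V), ip (a *: x + y) z = a * ip x z + ip y z;
  ip_herm : forall x y : V, ip y x = (ip x y)^*;
  ip_pos : forall x : V, 0 <= ip x x;
  ip_def : forall x : V, ip x x = 0 -> x = 0;
  ip_complete : forall u : nat -> V,
    (forall e : R, 0 < e -> exists N : nat, forall m n, (N <= m)%N -> (N <= n)%N ->
        hnorm2 (u m - u n) < e) ->
    exists x : V, forall e : R, 0 < e -> exists N : nat, forall n, (N <= n)%N ->
        hnorm2 (u n - x) < e;
  ip_separable : exists d : nat -> V, forall (x : V) (e : R), 0 < e ->
    exists n : nat, hnorm2 (x - d n) < e }.

(* Index set I : a countable set, realised as a subset of nat (sums over I are
   taken in the order of nat). psi : nat -> V, only psi i for i \in I matter. *)
Variables (I : set nat) (psi : nat -> V).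

Definition domC (f : V) : Prop :=
  (\sum_(0 <= i <oo | i \in I) (cabs2 (ip f (psi i)))%:E < +oo)%E.

Definition hclosure (M : set V) : set V :=
  fun x => forall e : R, 0 < e -> exists2 m, M m & hnorm2 (x - m) < e.

Definition HPsi : set V := hclosure domC.

Definition orth_proj_pt (M : set V) (x p : V) : Prop :=
  M p /\ forall m, M m -> ip (x - p) m = 0.

Definition lower_frame_seq : Prop :=
  exists A : R, 0 < A /\ forall f, domC f ->
    ((A * hnorm2 f)%:E <= \sum_(0 <= i <oo | i \in I) (cabs2 (ip f (psi i)))%:E)%E.

(* Generalized frame operator Gamma = (C^r)^* C^r, as a relation:
   gen_frame_op f y  <->  f \in D(Gamma) and Gamma f = y.
   f \in D(C^r), C^r f \in D((C^r)^* ) and (C^r)^*(C^r f) = y, i.e. y \in H_Psi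
   with <C^r f, C^r g>_{l^2} = <y, g> for all g \in D(C^r) = D(C_Psi). *)
Definition gen_frame_op (f y : V) : Prop :=
  domC f /\ HPsi y /\
  forall g, domC g ->
    cconv (fun n => \sum_(0 <= i < n | i \in I) ip f (psi i) * (ip g (psi i))^*)
          (ip y g).

(* psit is the canonical dual: psit_i = Gamma^{-1} pi_{H_Psi} psi_i, i.e.
   Gamma psit_i = pi_{H_Psi} psi_i (Gamma is injective for a lower frame seq.) *)
Definition is_canonical_dual (psit : nat -> V) : Prop :=
  forall i, i \in I -> exists p, orth_proj_pt HPsi (psi i) p /\ gen_frame_op (psit i) p.

Definition weakly_represents (c : nat -> C) (h : V) : Prop :=
  forall g, domC g ->
    cconv (fun n => \sum_(0 <= i < n | i \in I) c i * ip (psi i) g) (ip h g).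

End Hilbert.

From mathcomp Require Import all_boot all_order all_algebra.
From mathcomp Require Import all_classical all_reals all_analysis.
From mathcomp.real_closed Require Import complex.
From mathcomp Require Import ring lra.
Import Order.TTheory GRing.Theory Num.Theory numFieldNormedType.Exports.
Local Open Scope classical_set_scope.
Local Open Scope ring_scope.
Set Implicit Arguments.
Unset Strict Implicit.
Unset Printing Implicit Defensive.

(* The lower frame bound makes D(C_Psi), with the coefficient norm
   Q f = sum_i |<f, psi_i>|^2, complete (a Q-Cauchy sequence is Cauchy in H, and
   Q passes to its limit through the truncated sums), and it makes f |-> <h, f>
   bounded for Q.  Minimising Q f - 2 Re <h, f> over D(C_Psi) thus yields x with
   sum_i <x, psi_i> conj <f, psi_i> = <h, f> for all f in D(C_Psi), i.e.
   Gamma x = pi h.  Testing this at f = psit_i and using Gamma psit_i = pi psi_i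
   gives <h, psit_i> = <x, psi_i> =: d_i.  Both sum_i c_i conj d_i (the weak
   representation tested at x) and sum_i |d_i|^2 (the identity above at f = x)
   converge to <h, x>, so the cross terms of
   |c_i|^2 = |d_i|^2 + |c_i - d_i|^2 + 2 Re ((c_i - d_i) conj d_i) sum to zero. *)

Lemma eq_limits (R : realType) (u v : nat -> R) (a b : R) : (forall n, u n = v n) ->
  u n @[n --> \oo] --> a -> v n @[n --> \oo] --> b -> a = b.
Proof. by move=> /funext uv; rewrite uv => va vb; apply: cvg_unique va vb. Qed.

Section NonnegSeries.
Variables (R : realType) (I : set nat).
Implicit Types (t : nat -> R) (n : nat).

Definition psum t n : R := \sum_(0 <= i < n | i \in I) t i.

Definition eseries t : \bar R := (\sum_(0 <= i <oo | i \in I) (t i)%:E)%E.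

Lemma psum_le_eseries t n : (forall i, i \in I -> 0 <= t i) ->
  ((psum t n)%:E <= eseries t)%E.
Proof.
by move=> t0; rewrite -sumEFin; apply: nneseries_lim_ge => i _ /t0; rewrite lee_fin.
Qed.

Lemma eseries_le t M : (forall i, i \in I -> 0 <= t i) -> (forall n, psum t n <= M) ->
  (eseries t <= M%:E)%E.
Proof.
move=> t0 tM; apply: lime_le; first by apply: is_cvg_nneseries => i _ /t0; rewrite lee_fin.
by apply: nearW => n; rewrite sumEFin lee_fin; exact: tM.
Qed.

Lemma eseries_ge0 t : (forall i, i \in I -> 0 <= t i) -> (0 <= eseries t)%E.
Proof. by move=> t0; apply: nneseries_ge0 => i _ /t0; rewrite lee_fin. Qed.

Lemma eseries_fin t : (forall i, i \in I -> 0 <= t i) -> (eseries t < +oo)%E ->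
  eseries t = (fine (eseries t))%:E.
Proof. by move=> t0 fin; rewrite fineK // ge0_fin_numE // eseries_ge0. Qed.

Lemma cvg_partial_eseries t : (forall i, i \in I -> 0 <= t i) ->
  (\sum_(0 <= i < n | i \in I) (t i)%:E)%E @[n --> \oo] --> eseries t.
Proof. by move=> t0; apply: is_cvg_nneseries => i _ /t0; rewrite lee_fin. Qed.

Lemma cvg_psum t : (forall i, i \in I -> 0 <= t i) -> (eseries t < +oo)%E ->
  psum t n @[n --> \oo] --> fine (eseries t).
Proof.
move=> t0 fin; have := cvg_partial_eseries t0; rewrite (eseries_fin t0 fin).
move/fine_cvg; apply: cvg_trans; apply: near_eq_cvg; apply: nearW => n /=.
by rewrite sumEFin.
Qed.

Lemma eseries_add_cross a b r :
  (forall i, i \in I -> 0 <= a i) -> (forall i, i \in I -> 0 <= b i) ->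
  psum r n @[n --> \oo] --> 0 ->
  eseries (fun i => a i + b i + 2 * r i) = (eseries a + eseries b)%E.
Proof.
move=> a0 b0 r0; rewrite /eseries -nneseriesD; last 2 first.
- by move=> i _ /a0; rewrite lee_fin.
- by move=> i _ /b0; rewrite lee_fin.
apply: cvg_lim => //; rewrite -[X in _ --> X]adde0.
have -> : (fun n => \sum_(0 <= i < n | i \in I) (a i + b i + 2 * r i)%:E)%E =
    ((fun n => \sum_(0 <= i < n | i \in I) ((a i)%:E + (b i)%:E))
     \+ (fun n => (2 * psum r n)%:E))%E.
  by apply/funext => n; rewrite /= !sumEFin -EFinD /psum mulr_sumr -big_split.
apply: cvgeD; first by rewrite fin_num_adde_defl.
  by apply: is_cvg_nneseries => i _ /[dup] /a0 ? /b0 ?; rewrite adde_ge0.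
apply: cvg_EFin; first exact: nearW.
by rewrite -(mulr0 2); apply: cvgMl_tmp.
Qed.

End NonnegSeries.

Section ComplexFacts.
Variable R : realType.
Local Notation C := R[i].
Local Notation Re := complex.Re.
Local Notation Im := complex.Im.
Implicit Types (u : nat -> C) (z w : C).

Lemma quadratic_ge0_discr (a b c : R) : 0 <= c ->
  (forall t, 0 <= a + 2 * t * b + t ^+ 2 * c) -> b ^+ 2 <= a * c.
Proof.
move=> c0 qge0; have [c_gt0|] := ltP 0 c.
  have := qge0 (- b / c).
  have -> : a + 2 * (- b / c) * b + (- b / c) ^+ 2 * c = (a * c - b ^+ 2) / c.
    by field; rewrite gt_eqF.
  by rewrite pmulr_lge0 ?invr_gt0 // subr_ge0.
move=> c_le0; have c_eq0 : c = 0 by apply/eqP; rewrite eq_le c_le0 c0.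
move: qge0; rewrite c_eq0 mulr0 => qge0.
have [-> | b_neq0] := eqVneq b 0; first by rewrite expr0n.
have := qge0 (- (a + 1) / (2 * b)); rewrite mulr0 addr0.
have -> : 2 * (- (a + 1) / (2 * b)) * b = - (a + 1) by field.
lra.
Qed.

Lemma norm_lt_of_sqr_lt (x e : R) : 0 < e -> x ^+ 2 < e ^+ 2 -> `|x| < e.
Proof. by move=> e0 lt_xe; rewrite ltr_norml; apply/andP; split; nra. Qed.

Lemma cabs2_ge0 z : 0 <= cabs2 z.
Proof. by rewrite addr_ge0 // sqr_ge0. Qed.

Lemma cabs2M z w : cabs2 (z * w) = cabs2 z * cabs2 w.
Proof. by case: z w => [a b] [c d]; rewrite /cabs2 /=; ring. Qed.

Lemma cabs2N z : cabs2 (- z) = cabs2 z.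
Proof. by case: z => a b; rewrite /cabs2 /=; ring. Qed.

Lemma cabs2D_le z w : cabs2 (z + w) <= 2 * cabs2 z + 2 * cabs2 w.
Proof.
case: z w => [a b] [c d]; rewrite /cabs2 /=.
have := sqr_ge0 (a - c); have := sqr_ge0 (b - d); nra.
Qed.

Lemma cabs2_split z w : cabs2 z = cabs2 w + cabs2 (z - w) + 2 * Re ((z - w) * w^*).
Proof. by case: z w => [a b] [c d]; rewrite /cabs2 /=; ring. Qed.

Lemma Re_sum (r : seq nat) (P : pred nat) (F : nat -> C) :
  Re (\sum_(i <- r | P i) F i) = \sum_(i <- r | P i) Re (F i).
Proof. by apply: (big_morph (@complex.Re R)) => // -[? ?] [? ?]. Qed.

Lemma Im_sum (r : seq nat) (P : pred nat) (F : nat -> C) :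
  Im (\sum_(i <- r | P i) F i) = \sum_(i <- r | P i) Im (F i).
Proof. by apply: (big_morph (@complex.Im R)) => // -[? ?] [? ?]. Qed.

Lemma cconvP u l :
  cconv u l <-> Re (u n) @[n --> \oo] --> Re l /\ Im (u n) @[n --> \oo] --> Im l.
Proof.
split=> [ul | [/cvgrPdist_lt ReP /cvgrPdist_lt ImP] e e0].
  have part (p : C -> R) : (forall z, p z ^+ 2 <= cabs2 z) -> {morph p : z w / z - w} ->
      p (u n) @[n --> \oo] --> p l.
    move=> pz pB; apply/cvgrPdist_lt => e e0.
    have [N Nu] := ul _ (exprn_gt0 2 e0); exists N => // n /Nu /= ule.
    apply: norm_lt_of_sqr_lt => //; rewrite -pB.
    by apply: le_lt_trans (pz _) _; rewrite -cabs2N opprB.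
  split; apply: part; try by move=> [? ?] [? ?].
  - by move=> [a b]; rewrite /cabs2 lerDl sqr_ge0.
  - by move=> [a b]; rewrite /cabs2 lerDr sqr_ge0.
pose d := Num.min 1 (e / 2).
have d_gt0 : 0 < d by rewrite lt_min ltr01 divr_gt0.
have [d_le1 d_le] : d <= 1 /\ d <= e / 2 by rewrite !ge_min !lexx orbT.
have [N1 _ N1Re] := ReP _ d_gt0; have [N2 _ N2Im] := ImP _ d_gt0.
exists (maxn N1 N2) => n; rewrite geq_max => /andP[/N1Re /= hRe /N2Im /= hIm].
have -> : cabs2 (u n - l) = (Re (u n) - Re l) ^+ 2 + (Im (u n) - Im l) ^+ 2.
  by move: (u n) (l) => [? ?] [? ?].
move: hRe hIm; rewrite !ltr_norml => /andP[? ?] /andP[? ?]; nra.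
Qed.

Lemma cconv_unique u l l' : cconv u l -> cconv u l' -> l = l'.
Proof.
case: l l' => [a b] [a' b'] /cconvP[ReP ImP] /cconvP[ReP' ImP'].
have -> : a = a' by apply: cvg_unique ReP ReP'.
by have -> : b = b' by apply: cvg_unique ImP ImP'.
Qed.

Lemma cconv_conj u l : cconv u l -> cconv (fun n => (u n)^*) l^*.
Proof.
have ReJ z : Re z^* = Re z by case: z.
have ImJ z : Im z^* = - Im z by case: z.
move=> /cconvP[ReP ImP]; apply/cconvP; rewrite ReJ ImJ; split.
  by under eq_fun do rewrite ReJ.
by under eq_fun do rewrite ImJ; exact: cvgN.
Qed.

End ComplexFacts.

Section InnerProduct.
Variables (R : realType) (V : lmodType R[i]) (ip : V -> V -> R[i]).
Hypothesis HH : is_sep_hilbert ip.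
Local Notation Re := complex.Re.
Local Notation norm2 := (hnorm2 ip).
Implicit Types (x y z : V) (a : R[i]).

Lemma ipDl x y z : ip (x + y) z = ip x z + ip y z.
Proof. by have := ip_linl HH 1 x y z; rewrite scale1r mul1r. Qed.

Lemma ip0l z : ip 0 z = 0.
Proof. by apply/(addrI (ip 0 z)); rewrite -ipDl !addr0. Qed.

Lemma ipZl a x z : ip (a *: x) z = a * ip x z.
Proof. by have := ip_linl HH a x 0 z; rewrite addr0 ip0l addr0. Qed.

Lemma ipNl x z : ip (- x) z = - ip x z.
Proof. by rewrite -scaleN1r ipZl mulN1r. Qed.

Lemma ipBl x y z : ip (x - y) z = ip x z - ip y z.
Proof. by rewrite ipDl ipNl. Qed.

Lemma ipC x y : ip x y = (ip y x)^*.
Proof. exact: ip_herm. Qed.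

Lemma ipDr x y z : ip x (y + z) = ip x y + ip x z.
Proof. by rewrite !(ipC x) ipDl rmorphD. Qed.

Lemma ipZr a x y : ip x (a *: y) = a^* * ip x y.
Proof. by rewrite !(ipC x) ipZl rmorphM. Qed.

Lemma ipNr x z : ip x (- z) = - ip x z.
Proof. by rewrite !(ipC x) ipNl rmorphN. Qed.

Lemma ipxx x : ip x x = (norm2 x)%:C%C.
Proof.
move: (ip_pos HH x); rewrite /hnorm2.
by case: (ip x x) => a b; rewrite lecE /= => /andP[/eqP-> _].
Qed.

Lemma hnorm2_ge0 x : 0 <= norm2 x.
Proof.
move: (ip_pos HH x); rewrite /hnorm2.
by case: (ip x x) => a b; rewrite lecE /= => /andP[].
Qed.

Lemma hnorm2D x y : norm2 (x + y) = norm2 x + norm2 y + 2 * Re (ip x y).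
Proof.
rewrite {1}/hnorm2 ipDl !ipDr (ipC y x) !ipxx.
by case: (ip x y) => a b /=; ring.
Qed.

Lemma hnorm2B x y : norm2 (x - y) = norm2 x + norm2 y - 2 * Re (ip x y).
Proof.
rewrite {1}/hnorm2 ipDl ipNl !ipDr !ipNr (ipC y x) !ipxx.
by case: (ip x y) => a b /=; ring.
Qed.

Lemma hnorm2Z a x : norm2 (a *: x) = cabs2 a * norm2 x.
Proof.
rewrite {1}/hnorm2 ipZl ipZr ipxx.
by case: a => a b; rewrite /cabs2 /=; ring.
Qed.

Lemma Re_ip_CauchySchwarz x y : Re (ip x y) ^+ 2 <= norm2 x * norm2 y.
Proof.
apply: quadratic_ge0_discr (hnorm2_ge0 _) _ => t.
have := hnorm2_ge0 (x + t%:C%C *: y); rewrite hnorm2D hnorm2Z ipZr.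
by case: (ip x y) => a b; rewrite /cabs2 /= => ?; nra.
Qed.

Lemma cabs2_ip_le x y : cabs2 (ip x y) <= 2 * (norm2 x * norm2 y).
Proof.
have := Re_ip_CauchySchwarz x y; have := Re_ip_CauchySchwarz x ('i *: y).
rewrite hnorm2Z ipZr /cabs2 /=; case: (ip x y) => a b /=.
have := hnorm2_ge0 x; have := hnorm2_ge0 y; nra.
Qed.

End InnerProduct.

Section InverseSuccessor.
Variable R : realType.

Lemma exists_inv_succ_lt (e : R) : 0 < e -> exists N : nat, N.+1%:R^-1 < e.
Proof. by move=> e_gt0; have [N] := ltr_add_invr e_gt0; rewrite add0r; exists N. Qed.

Lemma inv_succ_le (N n : nat) : (N <= n)%N -> n.+1%:R^-1 <= N.+1%:R^-1 :> R.
Proof. by move=> le_Nn; rewrite lef_pV2 ?posrE ?ltr0n // ler_nat. Qed.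

Lemma le0_of_le_inv_succ (a c : R) : (forall n : nat, a <= c * n.+1%:R^-1) -> a <= 0.
Proof.
move=> le_ac; rewrite leNgt; apply/negP => a_gt0.
have c_ge0 : 0 <= c by have := le_ac 0%N; rewrite invr1 mulr1; apply: le_trans (ltW a_gt0).
have c1_gt0 : 0 < c + 1 := ltr_wpDl c_ge0 ltr01.
have [N ltN] := exists_inv_succ_lt (divr_gt0 a_gt0 c1_gt0).
have := le_ac N; rewrite leNgt => /negP; apply.
apply: le_lt_trans (_ : (c + 1) * N.+1%:R^-1 < a).
  by rewrite ler_wpM2r ?invr_ge0 ?ler0n // lerDl.
by rewrite mulrC -ltr_pdivlMr.
Qed.

End InverseSuccessor.

Section FrameSequence.
Variables (R : realType) (V : lmodType R[i]) (ip : V -> V -> R[i]).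
Hypothesis HH : is_sep_hilbert ip.
Variables (I : set nat) (psi : nat -> V).
Local Notation Re := complex.Re.
Local Notation Im := complex.Im.
Local Notation D := (domC ip I psi).
Implicit Types (f g : V) (n : nat).

Definition sqcoef f i := cabs2 (ip f (psi i)).

Definition coef_norm2 f := fine (eseries I (sqcoef f)).

Definition gram n f g := \sum_(0 <= i < n | i \in I) ip f (psi i) * (ip g (psi i))^*.

Definition coef_dot f g := (coef_norm2 (f + g) - coef_norm2 (f - g)) / 4.

Lemma sqcoef_ge0 f : forall i, i \in I -> 0 <= sqcoef f i.
Proof. by move=> i _; apply: cabs2_ge0. Qed.

Lemma coef_norm2_ge0 f : 0 <= coef_norm2 f.
Proof. exact/fine_ge0/eseries_ge0/sqcoef_ge0. Qed.

Lemma psum_le_coef_norm2 f n : D f -> psum I (sqcoef f) n <= coef_norm2 f.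
Proof.
move=> Df; rewrite -lee_fin /coef_norm2 -(eseries_fin (sqcoef_ge0 f) Df).
exact/psum_le_eseries/sqcoef_ge0.
Qed.

Lemma cvg_coef_norm2 f : D f -> psum I (sqcoef f) n @[n --> \oo] --> coef_norm2 f.
Proof. exact: cvg_psum (sqcoef_ge0 f). Qed.

Lemma domC_le f M : (forall n, psum I (sqcoef f) n <= M) -> D f /\ coef_norm2 f <= M.
Proof.
move=> le_M; have le_ME := eseries_le (sqcoef_ge0 f) le_M.
have Df : D f by apply: le_lt_trans le_ME _; rewrite ltry.
by split; rewrite // -lee_fin /coef_norm2 -(eseries_fin (sqcoef_ge0 f) Df).
Qed.

Lemma psum_sqcoefZ a f n : psum I (sqcoef (a *: f)) n = cabs2 a * psum I (sqcoef f) n.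
Proof.
by rewrite /psum mulr_sumr; apply: eq_bigr => i _; rewrite /sqcoef ipZl // cabs2M.
Qed.

Lemma domC0 : D 0.
Proof.
have [] // := @domC_le 0 0 => n; rewrite /psum big1 // => i _.
by rewrite /sqcoef ip0l // /cabs2 /=; ring.
Qed.

Lemma domCZ a f : D f -> D (a *: f).
Proof.
move=> Df; have [] // := @domC_le (a *: f) (cabs2 a * coef_norm2 f) => n.
by rewrite psum_sqcoefZ ler_wpM2l ?cabs2_ge0 ?psum_le_coef_norm2.
Qed.

Lemma psum_sqcoefD_le f g n :
  psum I (sqcoef (f + g)) n <= 2 * psum I (sqcoef f) n + 2 * psum I (sqcoef g) n.
Proof.
rewrite /psum !mulr_sumr -big_split; apply: ler_sum => i _.
by rewrite /sqcoef ipDl //; apply: cabs2D_le.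
Qed.

Lemma psum_sqcoef_le_norm2 f n :
  psum I (sqcoef f) n <= 2 * hnorm2 ip f * psum I (fun i => hnorm2 ip (psi i)) n.
Proof.
rewrite /psum mulr_sumr; apply: ler_sum => i _.
by rewrite -mulrA; apply: cabs2_ip_le.
Qed.

Lemma domCD f g : D f -> D g -> D (f + g).
Proof.
move=> Df Dg; have [] // := @domC_le (f + g) (2 * coef_norm2 f + 2 * coef_norm2 g) => n.
apply: le_trans (psum_sqcoefD_le f g n) _.
by apply: lerD; rewrite ler_pM2l ?psum_le_coef_norm2.
Qed.

Lemma domCB f g : D f -> D g -> D (f - g).
Proof. by move=> Df Dg; rewrite -scaleN1r; apply/domCD/domCZ. Qed.

Lemma coef_norm2Z a f : D f -> coef_norm2 (a *: f) = cabs2 a * coef_norm2 f.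
Proof.
move=> Df; apply: eq_limits (psum_sqcoefZ a f) (cvg_coef_norm2 (domCZ a Df)) _.
exact: cvgMl_tmp (cvg_coef_norm2 Df).
Qed.

Lemma Re_gram n f g :
  Re (gram n f g) = (psum I (sqcoef (f + g)) n - psum I (sqcoef (f - g)) n) / 4.
Proof.
rewrite /gram Re_sum /psum -sumrB mulr_suml; apply: eq_bigr => i _.
rewrite /sqcoef ipDl // ipBl //.
by case: (ip f (psi i)) (ip g (psi i)) => [a b] [c d]; rewrite /cabs2 /=; field.
Qed.

Lemma gram_conj n f g : (gram n f g)^* = gram n g f.
Proof.
rewrite /gram rmorph_sum; apply: eq_bigr => i _.
by case: (ip f (psi i)) (ip g (psi i)) => [a b] [c d] /=; congr (_ +i* _)%C; ring.
Qed.

Lemma Im_gram n f g : Im (gram n f g) = Re (gram n f ('i *: g)).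
Proof.
rewrite /gram Re_sum Im_sum; apply: eq_bigr => i _.
by rewrite ipZl //; case: (ip f (psi i)) (ip g (psi i)) => [a b] [c d] /=; ring.
Qed.

Lemma cvg_Re_gram f g : D f -> D g -> Re (gram n f g) @[n --> \oo] --> coef_dot f g.
Proof.
move=> Df Dg; under eq_fun do rewrite Re_gram.
by apply: cvgMr_tmp; apply: cvgB; apply: cvg_coef_norm2; [apply: domCD | apply: domCB].
Qed.

Lemma coef_norm2_expand f g (t : R) : D f -> D g ->
  coef_norm2 (f + t%:C%C *: g) = coef_norm2 f + 2 * t * coef_dot f g + t ^+ 2 * coef_norm2 g.
Proof.
move=> Df Dg.
have expand n : psum I (sqcoef (f + t%:C%C *: g)) n =
    psum I (sqcoef f) n + 2 * t * Re (gram n f g) + t ^+ 2 * psum I (sqcoef g) n.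
  rewrite /gram Re_sum /psum !mulr_sumr -!big_split; apply: eq_bigr => i _.
  rewrite /sqcoef ipDl // ipZl //.
  by case: (ip f (psi i)) (ip g (psi i)) => [a b] [c d]; rewrite /cabs2 /=; ring.
apply: eq_limits expand (cvg_coef_norm2 (domCD Df (domCZ _ Dg))) _.
exact: cvgD (cvgD (cvg_coef_norm2 Df) (cvgMl_tmp (cvg_Re_gram Df Dg)))
  (cvgMl_tmp (cvg_coef_norm2 Dg)).
Qed.

Lemma coef_dotDl f1 f2 g : D f1 -> D f2 -> D g ->
  coef_dot (f1 + f2) g = coef_dot f1 g + coef_dot f2 g.
Proof.
move=> D1 D2 Dg.
have additive n : Re (gram n (f1 + f2) g) = Re (gram n f1 g) + Re (gram n f2 g).
  rewrite /gram !Re_sum -big_split; apply: eq_bigr => i _ /=.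
  by rewrite ipDl // mulrDl; move: (ip f1 _ * _) (ip f2 _ * _) => [? ?] [? ?].
by apply: eq_limits additive (cvg_Re_gram (domCD D1 D2) Dg) (cvgD _ _); apply: cvg_Re_gram.
Qed.

Lemma coef_dot_CauchySchwarz f g : D f -> D g ->
  coef_dot f g ^+ 2 <= coef_norm2 f * coef_norm2 g.
Proof.
move=> Df Dg; apply: quadratic_ge0_discr (coef_norm2_ge0 _) _ => t.
by rewrite -coef_norm2_expand //; apply: coef_norm2_ge0.
Qed.

Lemma coef_norm2_parallelogram f g : D f -> D g ->
  coef_norm2 (f + g) + coef_norm2 (f - g) = 2 * coef_norm2 f + 2 * coef_norm2 g.
Proof.
move=> Df Dg; have := coef_norm2_expand 1 Df Dg; have := coef_norm2_expand (-1) Df Dg.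
by rewrite rmorph1 scale1r rmorphN1 scaleN1r => -> ->; ring.
Qed.

Section RieszRepresentation.
Variable A : R.
Hypothesis A_gt0 : 0 < A.
Hypothesis frame : forall f, D f -> A * hnorm2 ip f <= coef_norm2 f.
Variable h : V.
Local Notation Q := coef_norm2.
Local Notation norm2 := (hnorm2 ip).

Definition energy f := Q f - 2 * Re (ip h f).

Lemma energy_lower_bound f : D f -> - (norm2 h / A) <= energy f.
Proof.
move=> Df; rewrite /energy -(ler_pM2r A_gt0) mulNr divfK ?gt_eqF //.
have := hnorm2_ge0 HH (A%:C%C *: f - h).
rewrite hnorm2B // hnorm2Z // ipZl // (ipC HH f h).
have := frame Df; have := hnorm2_ge0 HH f.
case: (ip h f) => a b; rewrite /cabs2 /= expr0n addr0 mul0r subr0.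
by move=> _ /(ler_wpM2l (ltW A_gt0)) AQ ?; nra.
Qed.

Definition energy_inf := inf [set energy f | f in D].

Lemma energy_bounded : has_inf [set energy f | f in D].
Proof.
split; first by exists (energy 0), 0; first exact: domC0.
by exists (- (norm2 h / A)) => _ [g Dg <-]; apply: energy_lower_bound.
Qed.

Lemma energy_inf_le f : D f -> energy_inf <= energy f.
Proof. by move=> Df; apply: ge_inf; [case: energy_bounded | exists f]. Qed.

Lemma minimizing_seq : exists g : nat -> V,
  forall n, D (g n) /\ energy (g n) < energy_inf + n.+1%:R^-1.
Proof.
have near_inf n : exists f, D f /\ energy f < energy_inf + n.+1%:R^-1.
  have inv_gt0 : 0 < n.+1%:R^-1 :> R by rewrite invr_gt0.
  have [_ [f Df <-] lt_f] := inf_adherent inv_gt0 energy_bounded.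
  by exists f.
by have [g gP] := choice near_inf; exists g.
Qed.

Lemma energy_midpoint f g : D f -> D g ->
  Q (f - g) = 2 * energy f + 2 * energy g - 4 * energy ((1 / 2)%:C%C *: (f + g)).
Proof.
move=> Df Dg; rewrite /energy coef_norm2Z //; last exact: domCD.
have := coef_norm2_parallelogram Df Dg.
rewrite ipZr // ipDr //.
case: (ip h f) (ip h g) => [a b] [c d] /=; rewrite /cabs2 /= => par.
have -> : Q (f - g) = 2 * Q f + 2 * Q g - Q (f + g) by lra.
by field.
Qed.

Section MinimizingSequence.
Variable g : nat -> V.
Hypothesis Dg : forall n, D (g n).
Hypothesis g_min : forall n, energy (g n) < energy_inf + n.+1%:R^-1.

Lemma minseq_coef_dist n k : Q (g n - g k) <= 2 * n.+1%:R^-1 + 2 * k.+1%:R^-1.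
Proof.
rewrite energy_midpoint //.
have := energy_inf_le (domCZ (1 / 2)%:C%C (domCD (Dg n) (Dg k))).
have := g_min n; have := g_min k.
by move: (n.+1%:R^-1) (k.+1%:R^-1) => a b; lra.
Qed.

Lemma minseq_cauchy e : 0 < e -> exists N : nat,
  forall m n, (N <= m)%N -> (N <= n)%N -> norm2 (g m - g n) < e.
Proof.
move=> e_gt0; have Ae4_gt0 : 0 < A * e / 4 by rewrite divr_gt0 ?mulr_gt0.
have [N ltN] := exists_inv_succ_lt Ae4_gt0.
exists N => m n le_Nm le_Nn; rewrite -(ltr_pM2l A_gt0).
have le_m : m.+1%:R^-1 <= N.+1%:R^-1 :> R := inv_succ_le _ le_Nm.
have le_n : n.+1%:R^-1 <= N.+1%:R^-1 :> R := inv_succ_le _ le_Nn.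
have := frame (domCB (Dg m) (Dg n)); have := minseq_coef_dist m n.
by move: le_m le_n ltN; move: (m.+1%:R^-1) (n.+1%:R^-1) (N.+1%:R^-1) => a b c; lra.
Qed.

Variable x : V.
Hypothesis g_cvg :
  forall e, 0 < e -> exists N : nat, forall n, (N <= n)%N -> norm2 (g n - x) < e.

(* Fatou-type step: each truncated coefficient sum is continuous in the norm
   of H, so the Cauchy estimate of minseq_coef_dist survives k --> oo. *)
Lemma minseq_lim_coef_dist n : D (g n - x) /\ Q (g n - x) <= 4 * n.+1%:R^-1.
Proof.
apply: domC_le => M; apply/ler_addgt0Pr => e e_gt0.
pose C := psum I (fun i => norm2 (psi i)) M.
have C_ge0 : 0 <= C by apply: sumr_ge0 => i _; apply: hnorm2_ge0.
have C1_gt0 : 0 < C + 1 := ltr_wpDl C_ge0 ltr01.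
have e8_gt0 : 0 < e / 8 by rewrite divr_gt0.
have d_gt0 : 0 < e / (8 * (C + 1)) by rewrite divr_gt0 // mulr_gt0.
have [K ltK] := exists_inv_succ_lt e8_gt0.
have [K' ltK'] := g_cvg d_gt0.
pose k := maxn K K'.
have split_k : g n - x = (g n - g k) + (g k - x) by rewrite addrA subrK.
have far : psum I (sqcoef (g n - g k)) M <= 2 * n.+1%:R^-1 + e / 4.
  apply: le_trans (psum_le_coef_norm2 M (domCB (Dg n) (Dg k))) _.
  apply: le_trans (minseq_coef_dist n k) _; rewrite lerD2l.
  have := inv_succ_le R (leq_maxl K K'); rewrite -/k.
  by move: ltK; move: (k.+1%:R^-1) (K.+1%:R^-1) => a b; lra.
have near : psum I (sqcoef (g k - x)) M <= e / 4.
  apply: le_trans (psum_sqcoef_le_norm2 (g k - x) M) _; rewrite -/C.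
  apply: le_trans (_ : 2 * (e / (8 * (C + 1))) * (C + 1) <= _); last first.
    by rewrite le_eqVlt; apply/orP; left; apply/eqP; field; rewrite gt_eqF.
  apply: ler_pM; rewrite ?lerDl ?ler_pM2l ?mulr_ge0 ?hnorm2_ge0 //.
  exact/ltW/ltK'/leq_maxr.
rewrite split_k; apply: le_trans (psum_sqcoefD_le _ _ M) _.
by move: far; move: (n.+1%:R^-1) => a; lra.
Qed.

Lemma minseq_lim_domC : D x.
Proof.
have -> : x = g 0%N - (g 0%N - x) by rewrite opprB addrC subrK.
exact: domCB (Dg 0%N) (proj1 (minseq_lim_coef_dist 0%N)).
Qed.

(* g n is a 1/(n+1)-minimiser, so the energy along the line g n + t f is a
   quadratic in t bounded below by its value at 0 minus 1/(n+1). *)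
Lemma minseq_euler_defect f n : D f ->
  (coef_dot (g n) f - Re (ip h f)) ^+ 2 <= coef_norm2 f * n.+1%:R^-1.
Proof.
move=> Df; rewrite mulrC; apply: quadratic_ge0_discr (coef_norm2_ge0 _) _ => t.
have := energy_inf_le (domCD (Dg n) (domCZ t%:C%C Df)).
rewrite /energy coef_norm2_expand // ipDr // ipZr //.
have := g_min n; rewrite /energy.
case: (ip h (g n)) (ip h f) => [a b] [c d] /=.
by move: (n.+1%:R^-1) => r; lra.
Qed.

Lemma minseq_lim_euler f : D f -> coef_dot x f = Re (ip h f).
Proof.
move=> Df; apply/eqP; rewrite -subr_eq0 -sqrf_eq0 eq_le sqr_ge0 andbT.
apply: (@le0_of_le_inv_succ _ _ (10 * coef_norm2 f)) => n.
have [Dgx Qgx] := minseq_lim_coef_dist n.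
have := minseq_euler_defect n Df.
have -> : g n = x + (g n - x) by rewrite addrC subrK.
rewrite coef_dotDl //; last exact: minseq_lim_domC.
have := coef_dot_CauchySchwarz Dgx Df; have := ler_wpM2r (coef_norm2_ge0 f) Qgx.
have := coef_norm2_ge0 f.
move: (coef_dot x f) (coef_dot (g n - x) f) (n.+1%:R^-1) => b1 b2 r.
by nra.
Qed.

Lemma minseq_lim_represents f : D f -> cconv (fun n => gram n x f) (ip h f).
Proof.
move=> Df; apply/cconvP; split=> /=.
  by rewrite -minseq_lim_euler //; apply: cvg_Re_gram minseq_lim_domC Df.
have -> : complex.Im (ip h f) = Re (ip h ('i *: f)).
  by rewrite ipZr //; case: (ip h f) => a b /=; ring.
rewrite (funext (fun n => Im_gram n x f)) -minseq_lim_euler; last exact: domCZ.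
exact: cvg_Re_gram minseq_lim_domC (domCZ _ Df).
Qed.

End MinimizingSequence.

Lemma riesz_representation :
  exists2 x, D x & forall f, D f -> cconv (fun n => gram n x f) (ip h f).
Proof.
have [g g_min] := minimizing_seq.
have Dg n := proj1 (g_min n); have g_lt n := proj2 (g_min n).
have [x g_cvg] := ip_complete HH (minseq_cauchy Dg g_lt).
by exists x; [apply: minseq_lim_domC g_cvg | apply: minseq_lim_represents g_cvg].
Qed.

End RieszRepresentation.

Lemma lower_frame_bound : lower_frame_seq ip I psi ->
  exists2 A, 0 < A & forall f, D f -> A * hnorm2 ip f <= coef_norm2 f.
Proof.
case=> A [A_gt0 frame]; exists A => // f Df.
by rewrite -lee_fin /coef_norm2 -(eseries_fin (sqcoef_ge0 f) Df); apply: frame.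
Qed.

Lemma canonical_dual_coef x h psit :
  D x -> (forall f, D f -> cconv (fun n => gram n x f) (ip h f)) ->
  is_canonical_dual ip I psi psit -> forall i, i \in I -> ip h (psit i) = ip x (psi i).
Proof.
move=> Dx rep dual i iI; have [p [[HPp p_perp] [Dpsit [_ Gpsit]]]] := dual i iI.
have HPx : HPsi ip I psi x by move=> e e_gt0; exists x; rewrite // subrr /hnorm2 ip0l.
have /cconv_conj : cconv (fun n => gram n (psit i) x) (ip p x) := Gpsit x Dx.
rewrite (funext (fun n => gram_conj n (psit i) x)) => /(cconv_unique (rep _ Dpsit)) ->.
have /eqP : ip (psi i - p) x = 0 := p_perp x HPx.
by rewrite ipBl // subr_eq0 => /eqP <-; rewrite -ipC.
Qed.

Lemma cross_term_cvg0 (c d : nat -> R[i]) x h :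
  weakly_represents ip I psi c h -> D x ->
  cconv (fun n => gram n x x) (ip h x) -> (forall i, i \in I -> d i = ip x (psi i)) ->
  psum I (fun i => Re ((c i - d i) * (d i)^*)) n @[n --> \oo] --> 0.
Proof.
move=> wr Dx /cconvP[rep _] dE; have /cconvP[wrx _] := wr x Dx.
have cross n : psum I (fun i => Re ((c i - d i) * (d i)^*)) n =
    Re (\sum_(0 <= i < n | i \in I) c i * ip (psi i) x) - Re (gram n x x).
  rewrite /psum /gram !Re_sum -sumrB; apply: eq_bigr => i iI.
  rewrite dE // (ipC HH (psi i) x).
  by case: (c i) (ip x (psi i)) => [a b] [a' b'] /=; ring.
rewrite (eq_cvg _ _ cross); have := cvgB wrx rep; rewrite subrr; exact.
Qed.

End FrameSequence.

Unset Implicit Arguments.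
Set Strict Implicit.

Theorem lemma6p13 (R : realType) (V : lmodType R[i]) (ip : V -> V -> R[i])
  (I : set nat) (psi psit : nat -> V) (h : V) (c : nat -> R[i]) :
  is_sep_hilbert ip ->
  lower_frame_seq ip I psi ->
  is_canonical_dual ip I psi psit ->
  weakly_represents ip I psi c h ->
  (\sum_(0 <= i <oo | i \in I) (cabs2 (c i))%:E =
     \sum_(0 <= i <oo | i \in I) (cabs2 (ip h (psit i)))%:E +
     \sum_(0 <= i <oo | i \in I) (cabs2 (c i - ip h (psit i)))%:E)%E /\
  (\sum_(0 <= i <oo | i \in I) (cabs2 (ip h (psit i)))%:E <=
     \sum_(0 <= i <oo | i \in I) (cabs2 (c i))%:E)%E.
Proof.
move=> HH /lower_frame_bound[A A_gt0 frame] dual wr.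
have [x Dx rep] := riesz_representation HH A_gt0 frame h.
have dualE := canonical_dual_coef HH Dx rep dual.
pose d i := ip h (psit i).
have pythagoras : eseries I (fun i => cabs2 (c i)) =
    (eseries I (fun i => cabs2 (d i)) + eseries I (fun i => cabs2 (c i - d i)%R))%E.
  have cross := cross_term_cvg0 HH wr Dx (rep x Dx) dualE.
  have sq_ge0 (z : nat -> R[i]) i : i \in I -> 0 <= cabs2 (z i).
    by move=> _; apply: cabs2_ge0.
  rewrite -(eseries_add_cross (sq_ge0 _) (sq_ge0 _) cross).
  by apply: eq_eseriesr => i _; rewrite (cabs2_split _ (d i)).
rewrite /eseries in pythagoras; split=> //.
by rewrite pythagoras leeDl //; apply: eseries_ge0 => i _; apply: cabs2_ge0.
Qed.
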